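(* Let $n\ge2$ and $\sigma\ge2$ be integers, and let $s$ be a random string of length $n$ whose characters are drawn independently and uniformly from an alphabet of size $\sigma$. Set $p=(\sigma-1)/\sigma$, let $r(s)$ be the number of maximal runs of $s$, and let $k$ be the number of tokens of $\mathcal{F}(s)$. Then $r(s)-1\sim\mathrm{Bin}(n-1,p)$ and \[\mathbb{E}[k]=1+\frac{1+(n-1)p}{2}+\frac{1+\bigl((2-\sigma)/\sigma\bigr)^{n-1}}{4}=\frac{n(\sigma-1)}{2\sigma}+O(1).\]
   Context: A maximal run of a string is a maximal block of consecutive equal symbols. Let $\texttt{@},\texttt{\$}$ be two distinct symbols not in the alphabet. For a string $s$ of length $n$ let $\hat s=\texttt{@}\,s\,\texttt{\$}$ (positions $1,\dots,n+2$); $\hat s[i..j)$ is the substring at positions $i,\dots,j-1$. The leading (trailing) run of a non-empty string is its longest prefix (suffix) consisting of one repeated symbol. The Flashback decomposition $\mathcal{F}(s)$ is the sequence of tokens (pairs $(\sigma,p)$) produced as follows, starting from active span $[lo,hi)=[1,n+3)$: if $lo\ge hi$, stop. Let $\ell$ be the length of the leading run of $\hat s[lo..hi)$. If $\ell=hi-lo$, append $(\hat s[lo..hi),0)$ and stop. Otherwise let $\hat s[r..hi)$ be the trailing run of $\hat s[lo..hi)$ and $\sigma=\hat s[lo..lo+\ell)\cdot\hat s[r..hi)$; if $lo+\ell\ge r$, append $(\sigma,0)$ and stop; otherwise append $(\sigma,\ell)$ and repeat with active span $[lo+\ell,r)$. *)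

From HB Require Import structures.
From mathcomp Require Import all_boot all_order all_algebra.
Set Implicit Arguments. Unset Strict Implicit. Unset Printing Implicit Defensive.
Import Order.TTheory GRing.Theory Num.Theory.

(* Extended alphabet: the sentinels @ and $ plus the original symbols. *)
Inductive ext (T : Type) := At | Dol | Chr of T.
Arguments At {T}. Arguments Dol {T}.

Definition ext_eqb (T : eqType) (a b : ext T) : bool :=
  match a, b with
  | At, At => true | Dol, Dol => true
  | Chr x, Chr y => x == y | _, _ => false end.
Lemma ext_eqP (T : eqType) : Equality.axiom (@ext_eqb T).
Proof. by case=> [||x] [||y] /=; try constructor => //; apply: (iffP eqP) => [->|[]]. Qed.
HB.instance Definition _ (T : eqType) := hasDecEq.Build (ext T) (@ext_eqP T).

Definition hat (T : Type) (s : seq T) : seq (ext T) := At :: rcons (map (@Chr T) s) Dol.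

Definition lead_len (X : eqType) (u : seq X) : nat :=
  match u with [::] => 0 | x :: _ => find (predC1 x) u end.
Definition trail_len (X : eqType) (u : seq X) : nat := lead_len (rev u).

(* The Flashback loop on the active substring u = hat s[lo..hi);
   fuel bounds the number of iterations (size u + 1 suffices, since each
   non-final step strictly shrinks the span). *)
Fixpoint flash_aux (X : eqType) (fuel : nat) (u : seq X) : seq (seq X * nat) :=
  match fuel with
  | 0 => [::]
  | fuel'.+1 =>
    if u is [::] then [::] else
    let l := lead_len u in
    if l == size u then [:: (u, 0)] else
    let r := size u - trail_len u in
    let sigma := take l u ++ drop r u in
    if r <= l then [:: (sigma, 0)]
    else (sigma, l) :: flash_aux fuel' (take (r - l) (drop l u))
  end.

Definition flashback (T : eqType) (s : seq T) : seq (seq (ext T) * nat) :=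
  flash_aux (size (hat s)).+1 (hat s).

Fixpoint runs_aux (X : eqType) (fuel : nat) (u : seq X) : nat :=
  match fuel with
  | 0 => 0
  | fuel'.+1 => if u is [::] then 0 else (runs_aux fuel' (drop (lead_len u) u)).+1
  end.
Definition runs (X : eqType) (u : seq X) : nat := runs_aux (size u) u.

Local Open Scope ring_scope.
Definition Pr (T : finType) (P : pred T) : rat :=
  (\sum_(x : T | P x) 1) / #|T|%:R.
Definition Ex (T : finType) (X : T -> nat) : rat :=
  (\sum_(x : T) (X x)%:R) / #|T|%:R.

From mathcomp Require Import all_boot all_order all_algebra.
From mathcomp Require Import zify ring lra.
Import Order.TTheory GRing.Theory Num.Theory.
Set Implicit Arguments. Unset Strict Implicit. Unset Printing Implicit Defensive.

(* Each non-final step of the Flashback loop strips the leading and the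
   trailing maximal run of the active span, so F(s) has ceil(r(@s$)/2) =
   1 + ceil(r(s)/2) tokens.  Write r(s) = 1 + B, where B counts the indices i
   with s_i <> s_(i+1): peeling off the first character of a uniform string
   shows B ~ Bin(n-1, p).  Then k = 7/4 + B/2 + (-1)^B/4, and
   E[(-1)^B] = (1 - 2p)^(n-1) = ((2 - sigma)/sigma)^(n-1). *)

Section Runs.
Variable X : eqType.
Implicit Types (x y : X) (t u v w : seq X).

Fixpoint changes x t : nat :=
  if t is y :: t' then (x != y) + changes y t' else 0.

Lemma changes_cat x u v : changes x (u ++ v) = changes x u + changes (last x u) v.
Proof. by elim: u x => [|y u IH] x //=; rewrite IH addnA. Qed.

Lemma changes_nseq x n : changes x (nseq n x) = 0.
Proof. by elim: n => //= n ->; rewrite eqxx. Qed.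

Lemma last_nseq x n : last x (nseq n x) = x.
Proof. by elim: n. Qed.

Lemma lead_len_cons x t : lead_len (x :: t) = (find (predC1 x) t).+1.
Proof. by rewrite /lead_len /= eqxx. Qed.

Lemma lead_run x t : exists n v, [/\ x :: t = nseq n.+1 x ++ v,
  lead_len (x :: t) = n.+1 & (v == [::]) || (head x v != x)].
Proof.
rewrite lead_len_cons.
elim: t => [|y t [n [v [[Et] Hn Hv]]]]; first by exists 0, [::].
have [->|Nyx] := eqVneq y x; last by exists 0, (y :: t); rewrite /= Nyx.
by exists n.+1, v; rewrite /= eqxx /= Hn Et.
Qed.

Lemma runs_cons x t : runs (x :: t) = (changes x t).+1.
Proof.
suff H f : size t < f -> runs_aux f (x :: t) = (changes x t).+1 by exact: H.
elim: f x t => // f IH x t Hf; cbn -[lead_len].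
have [n [v [Et -> Hv]]] := lead_run x t.
rewrite Et drop_size_cat ?size_nseq //; congr _.+1.
case: Et => Et; rewrite Et changes_cat changes_nseq last_nseq.
case: v Hv Et => [|z v] /=; first by case: f {IH Hf}.
move=> Nzx Et; move: Hf; rewrite Et size_cat size_nseq /= => Hf; rewrite IH; last by lia.
by rewrite eq_sym Nzx.
Qed.

Lemma changes_runs x v : (v == [::]) || (head x v != x) -> changes x v = runs v.
Proof. by case: v => [|z v] //= Nzx; rewrite runs_cons eq_sym Nzx. Qed.

Lemma runs_lead x n v : (v == [::]) || (head x v != x) ->
  runs (nseq n.+1 x ++ v) = (runs v).+1.
Proof.
by move=> Hv; rewrite cat_cons runs_cons changes_cat changes_nseq last_nseq changes_runs.
Qed.

Lemma runs_trail y n w : (w == [::]) || (last y w != y) ->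
  runs (w ++ nseq n.+1 y) = (runs w).+1.
Proof.
case: w => [|z w] /= Hw; first by rewrite runs_cons changes_nseq.
by rewrite !runs_cons changes_cat /= Hw changes_nseq addn1.
Qed.

Lemma trail_run u : u != [::] -> exists n y w, [/\ u = w ++ nseq n.+1 y,
  trail_len u = n.+1 & (w == [::]) || (last y w != y)].
Proof.
move=> Hu; rewrite /trail_len.
case Er: (rev u) => [|y t]; first by move: Hu; rewrite -(revK u) Er.
have [n [v [Et Hn Hv]]] := lead_run y t.
exists n, y, (rev v); split => //.
  by rewrite -(revK u) Er Et rev_cat rev_nseq.
by case: v {Et} Hv => [|z v] //= Nzy; rewrite rev_cons last_rcons Nzy orbT.
Qed.

Lemma runs_nseq x n : runs (nseq n.+1 x) = 1.
Proof. by rewrite runs_cons changes_nseq. Qed.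

Section StripRuns.
Variables (x y : X) (l m : nat) (v w : seq X).
Hypothesis split_vw : nseq l.+1 x ++ v = w ++ nseq m.+1 y.
Hypothesis lead_end : (v == [::]) || (head x v != x).
Hypothesis trail_end : (w == [::]) || (last y w != y).

Lemma runs_overlap : v != [::] -> size w <= l.+1 -> runs (w ++ nseq m.+1 y) = 2.
Proof.
move=> v_nonempty le_w; rewrite -split_vw runs_lead //.
have Ev : v = nseq (m.+1 - (l.+1 - size w)) y.
  by rewrite -(drop_size_cat v (size_nseq l.+1 x)) split_vw drop_cat ltnNge le_w drop_nseq.
by move: v_nonempty; rewrite Ev; case: (_ - _) => [|k] // _; rewrite runs_nseq.
Qed.

Lemma runs_strip : l.+1 < size w -> runs (w ++ nseq m.+1 y) = (runs (drop l.+1 w)).+2.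
Proof.
move=> lt_w; rewrite runs_trail //.
have take_w : take l.+1 w = nseq l.+1 x.
  by rewrite -(take_size_cat v (size_nseq l.+1 x)) split_vw take_cat lt_w.
have Ev : v = drop l.+1 w ++ nseq m.+1 y.
  by rewrite -(drop_size_cat v (size_nseq l.+1 x)) split_vw drop_cat lt_w.
rewrite -{1}(cat_take_drop l.+1 w) take_w runs_lead //.
case Emid: (drop l.+1 w) Ev => [|z mid] Ev.
  by move: lt_w; rewrite -subn_gt0 -size_drop Emid.
by move: lead_end; rewrite Ev.
Qed.
End StripRuns.

Lemma size_flash_aux f u : size u < f -> size (flash_aux f u) = uphalf (runs u).
Proof.
elim: f u => [|f IH] [|x t] // Hf.
have [l [v [Eu Hl Hv]]] := lead_run x t.
have [m [y [w [Eu' Hm Hw]]]] := trail_run (isT : x :: t != [::]).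
cbn -[lead_len trail_len size take drop eq_op leq]; rewrite Hl Hm.
move: (x :: t) Hf Eu Eu' => u Hf Eu Eu'.
have size_u : size u = l.+1 + size v by rewrite Eu size_cat size_nseq.
have -> : size u - m.+1 = size w by rewrite Eu' size_cat size_nseq addnK.
have split_vw : nseq l.+1 x ++ v = w ++ nseq m.+1 y by rewrite -Eu.
case: eqP => [Hlu|Hlu].
  have v_nil : v = [::] by apply/nilP; rewrite /nilp -(eqn_add2l l.+1) -size_u -Hlu addn0.
  by rewrite Eu v_nil cats0 runs_nseq.
have v_nonempty : v != [::] by apply/eqP => v0; apply: Hlu; rewrite size_u v0 addn0.
case: leqP => [le_w|lt_w].
  by rewrite Eu' (runs_overlap split_vw Hv v_nonempty le_w).
rewrite take_drop subnK ?(ltnW lt_w) // Eu' (take_size_cat _ (erefl (size w))).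
rewrite (runs_strip split_vw Hv Hw lt_w) /= IH // size_drop.
by move: Hf; rewrite Eu' size_cat size_nseq; lia.
Qed.
End Runs.

Lemma changes_map (T : eqType) (a : T) s : changes (Chr a) (map (@Chr T) s) = changes a s.
Proof. by elim: s a => [|b s IH] a //=; rewrite IH. Qed.

Lemma runs_hat (T : eqType) (s : seq T) : runs (hat s) = (runs s).+2.
Proof.
case: s => [|a s]; first by rewrite /hat /= runs_cons.
by rewrite /hat -cats1 !runs_cons /= changes_cat changes_map last_map /= add1n addn1.
Qed.

Lemma size_flashback (T : eqType) (s : seq T) : size (flashback s) = (uphalf (runs s)).+1.
Proof. by rewrite /flashback size_flash_aux // runs_hat. Qed.

Local Open Scope ring_scope.

Lemma uphalf_sign (R : comPzRingType) m :
  4 * (uphalf m)%:R = 2 * m%:R + 1 - (-1) ^+ m :> R.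
Proof.
rewrite -signr_odd uphalf_half; move: (odd_double_half m).
move: (odd m) (m./2) => b h <-; rewrite -muln2 !natrD natrM.
by case: b; rewrite /= ?expr0 ?expr1; ring.
Qed.

Section TupleSums.
Variable T : finType.

Lemma sum_tuple_cons (V : nmodType) n (F : seq T -> V) :
  \sum_(t : n.+1.-tuple T) F t = \sum_(t : n.-tuple T) \sum_(x : T) F (x :: t).
Proof.
rewrite pair_big (reindex (fun p : n.-tuple T * T => [tuple of p.2 :: p.1])) /=.
  by apply: eq_bigr => -[t x].
exists (fun t : n.+1.-tuple T => (behead_tuple t, thead t)) => [[t x] _|t _] /=.
  by congr pair; apply: val_inj.
by rewrite [RHS]tuple_eta.
Qed.

Lemma sum_neq (V : nmodType) (y : T) (G : bool -> V) :
  \sum_(x : T) G (x != y) = G false + G true *+ #|T|.-1.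
Proof.
rewrite (bigD1 y) //= eqxx -(cardC1 y) -sumr_const; congr (_ + _).
by apply: eq_bigr => x /negbTE ->.
Qed.

Lemma sum_runs_step (V : nmodType) n (g : nat -> V) :
  \sum_(t : n.+2.-tuple T) g (runs t).-1 =
  \sum_(t : n.+1.-tuple T) (g (runs t).-1 + g (runs t).-1.+1 *+ #|T|.-1).
Proof.
rewrite (sum_tuple_cons _ (fun s => g (runs s).-1)); apply: eq_bigr => -[[|y s] // Hs] _.
under eq_bigr do rewrite runs_cons.
by rewrite runs_cons (sum_neq y (fun b : bool => g (b + changes y s)%N)).
Qed.

Lemma sum_runs_tuple1 (V : nmodType) (g : nat -> V) :
  \sum_(t : 1.-tuple T) g (runs t).-1 = g 0%N *+ #|T|.
Proof.
rewrite (sum_tuple_cons _ (fun s => g (runs s).-1)).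
rewrite (eq_bigr (fun=> g 0%N *+ #|T|)) ?sumr_const ?card_tuple // => t _.
by rewrite tuple0 -sumr_const; apply: eq_bigr => x _; rewrite runs_cons.
Qed.

Lemma sum_runs_eq (R : pzSemiRingType) n j :
  \sum_(t : n.+1.-tuple T) (((runs t).-1 == j)%:R : R) = ('C(n, j) * #|T| * #|T|.-1 ^ j)%:R.
Proof.
elim: n j => [|n IH] j.
  rewrite (sum_runs_tuple1 (fun r => (r == j)%:R)).
  by case: j => [|j]; rewrite ?mul0rn // bin0 mul1n muln1.
rewrite (sum_runs_step n (fun r => (r == j)%:R)) big_split /= sumrMnl IH.
case: j => [|j]; first by rewrite big1 // mul0rn addr0 !bin0.
rewrite IH binS -mulrnA -natrD; congr _%:R; rewrite expnS; ring.
Qed.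

Lemma sum_runs_pred (R : pzSemiRingType) n :
  \sum_(t : n.+1.-tuple T) (((runs t).-1)%:R : R) = (n * #|T|.-1 * #|T| ^ n)%:R.
Proof.
elim: n => [|n IH]; first by rewrite (sum_runs_tuple1 (fun r => r%:R)) mul0rn.
rewrite (sum_runs_step n (fun r => r%:R)) big_split /= sumrMnl.
under [X in _ + X *+ _]eq_bigr do rewrite -natr1.
rewrite big_split /= IH sumr_const card_tuple -natrD -mulrnA -natrD.
by congr _%:R; case: #|T| => [|k] /=; rewrite !expnS; ring.
Qed.

Lemma sum_runs_sign (R : pzRingType) n :
  \sum_(t : n.+1.-tuple T) ((-1) ^+ (runs t).-1 : R) = #|T|%:R * (1 - (#|T|.-1)%:R) ^+ n.
Proof.
elim: n => [|n IH]; first by rewrite (sum_runs_tuple1 (fun r => (-1) ^+ r)) !expr0 mulr1.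
have sign_step r : (-1) ^+ r + (-1) ^+ r.+1 *+ #|T|.-1 = (-1) ^+ r * (1 - (#|T|.-1)%:R) :> R.
  by rewrite exprS mulN1r mulNrn mulrBr mulr1 mulr_natr.
rewrite (sum_runs_step n (fun r => (-1) ^+ r)).
under eq_bigr do rewrite sign_step.
by rewrite -mulr_suml IH exprSr mulrA.
Qed.
End TupleSums.

Section UniformTuples.
Variables (T : finType) (n : nat).
Hypothesis T_gt0 : (0 < #|T|)%N.

Let k : rat := #|T|%:R.

Lemma natr_card_neq0 : k != 0.
Proof. by rewrite pnatr_eq0 -lt0n. Qed.

Lemma natr_pred_card : (#|T|.-1)%:R = k - 1.
Proof. by rewrite -subn1 natrB. Qed.

Lemma Pr_runs j :
  let p := (k - 1) / k in
  Pr (fun s : n.+1.-tuple T => (runs s).-1 == j) = 'C(n, j)%:R * p ^+ j * (1 - p) ^+ (n - j).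
Proof.
move=> p; rewrite /Pr big_mkcond /=.
rewrite (eq_bigr (fun s : n.+1.-tuple T => ((runs s).-1 == j)%:R)) => [|s _]; last by case: eqP.
rewrite sum_runs_eq card_tuple.
have [le_jn|lt_nj] := leqP j n; last by rewrite bin_small // !mul0n !mul0r.
have -> : 1 - p = k^-1 by rewrite /p; field; apply: natr_card_neq0.
rewrite -(subnKC le_jn) addKn expnS expnD !natrM !natrX natr_pred_card.
by rewrite /p expr_div_n exprVn; field; rewrite !expf_neq0 ?natr_card_neq0.
Qed.

Lemma natr_size_flashback (s : n.+1.-tuple T) :
  (size (flashback s))%:R = (7 + 2 * ((runs s).-1)%:R + (-1) ^+ (runs s).-1) / 4 :> rat.
Proof.
case: s => -[|a s] // Hs; rewrite size_flashback runs_cons succnK.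
move: (changes a s) => B; have := uphalf_sign rat B.+1.
by rewrite exprS -[B.+1]addn1 -[(uphalf _).+1]addn1 !natrD; lra.
Qed.

Lemma Ex_flashback :
  Ex (fun s : n.+1.-tuple T => size (flashback s)) =
  1 + (1 + n%:R * ((k - 1) / k)) / 2 + (1 + ((2 - k) / k) ^+ n) / 4.
Proof.
rewrite /Ex card_tuple.
under eq_bigr do rewrite natr_size_flashback.
rewrite -mulr_suml !big_split /= -mulr_sumr sum_runs_pred sum_runs_sign sumr_const card_tuple.
rewrite !natrM !natrX natr_pred_card -/k exprS expr_div_n.
have -> : 1 - (k - 1) = 2 - k by ring.
by field; rewrite -/k expf_neq0 natr_card_neq0.
Qed.

Lemma Ex_flashback_linear :
  `|Ex (fun s : n.+1.-tuple T => size (flashback s)) - n.+1%:R * (k - 1) / (2 * k)| <= 2.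
Proof.
have k_ge1 : 1 <= k by rewrite ler1n.
set p := (k - 1) / k; set q := (2 - k) / k.
have p_bounds : 0 <= p <= 1.
  by rewrite divr_ge0 ?subr_ge0 // ler_pdivrMr ?mul1r ?gerDl //; lra.
have q_bounds : `|q ^+ n| <= 1.
  rewrite normrX exprn_ile1 // ler_norml /q ler_pdivrMr ?ler_pdivlMr; lra.
rewrite Ex_flashback -/p -/q.
have -> : n.+1%:R * (k - 1) / (2 * k) = (n%:R + 1) * p / 2.
  by rewrite /p -natr1; field; rewrite natr_card_neq0.
move: p_bounds q_bounds; rewrite ler_norml => /andP [? ?] /andP [? ?].
rewrite ler_norml; apply/andP; split; lra.
Qed.
End UniformTuples.

Theorem theorem5p2 (sigma : nat) (Hsigma : (2 <= sigma)%N) :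
  let p : rat := (sigma%:R - 1) / sigma%:R in
  (forall n : nat, (2 <= n)%N ->
     (* r(s) - 1 ~ Bin(n-1, p) *)
     (forall j : nat,
        Pr (fun s : n.-tuple 'I_sigma => (runs (val s)).-1 == j)
        = ('C(n.-1, j))%:R * p ^+ j * (1 - p) ^+ (n.-1 - j)) /\
     (* E[k] exact formula *)
     Ex (fun s : n.-tuple 'I_sigma => size (flashback (val s)))
     = 1 + (1 + (n.-1)%:R * p) / 2%:R
         + (1 + ((2%:R - sigma%:R) / sigma%:R) ^+ n.-1) / 4%:R) /\
  (* E[k] = n(sigma-1)/(2 sigma) + O(1) as n -> oo *)
  (exists C : rat, forall n : nat, (2 <= n)%N ->
     `| Ex (fun s : n.-tuple 'I_sigma => size (flashback (val s)))
        - n%:R * (sigma%:R - 1) / (2%:R * sigma%:R) | <= C).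
Proof.
move=> p; have card_gt0 : (0 < #|'I_sigma|)%N by rewrite card_ord ltnW.
split=> [[|m] // _|]; last first.
  by exists 2 => -[|m] // _; have := Ex_flashback_linear m card_gt0; rewrite card_ord.
split=> [j|]; first by have := Pr_runs m card_gt0 j; rewrite card_ord.
by have := Ex_flashback m card_gt0; rewrite card_ord.
Qed.
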